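(* Let $b,\beta,\gamma$ be real with $\beta>0$ and $0<b+1<\gamma<b+1+\beta$, and for $0\le v<1$ let $$K(v)=\frac{F(b,\beta;\gamma;v)}{F(b+1,\beta;\gamma;v)}.$$ Then: (i) $K(0)=1$; (ii) $\lim_{v\to1}K(v)=0$; (iii) if $b\ge0$, or if $-1<b<0$ and $\gamma\ge\beta$, then $K$ is monotone decreasing; (iv) if $-1<b<0$ and $\gamma<\beta$, then the minimum of $K$ is a negative value and $K(v)$ approaches $0$ from below as $v\to1$; moreover $\inf_{0\le v<1}K(v)\ge b/(b+1)$.
   Context: $F(\alpha,\beta;\gamma;z)=1+\sum_{i\ge1}\frac{(\alpha)_i(\beta)_i}{(\gamma)_i}\frac{z^i}{i!}$ is the Gauss hypergeometric function, with $(\alpha)_i=\alpha(\alpha+1)\cdots(\alpha+i-1)$, for $|z|<1$. *)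

From Stdlib Require Import Reals Factorial.
From Coquelicot Require Import Coquelicot.
Open Scope R_scope.

Fixpoint poch (a : R) (n : nat) : R :=
  match n with
  | O => 1
  | S k => poch a k * (a + INR k)
  end.

Definition hyp_coef (al be ga : R) (n : nat) : R :=
  poch al n * poch be n / (poch ga n * INR (Factorial.fact n)).

(* Gauss hypergeometric function F(al,be;ga;z), meaningful for |z| < 1. *)
Definition hyp2F1 (al be ga z : R) : R := PSeries (hyp_coef al be ga) z.

Definition Kfun (b be ga v : R) : R :=
  hyp2F1 b be ga v / hyp2F1 (b + 1) be ga v.

From Stdlib Require Import Reals Lra Lia Classical.
From Coquelicot Require Import Coquelicot.
Open Scope R_scope.

(* Write a_n, p_n for the coefficients of F(b,be;ga;.) and F(b+1,be;ga;.), so that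
   K = A/P with A, P their sums.  Then a_n (b+n) = b p_n, and the contiguous relation
   F(b,be;ga;v) = F(b+1,be;ga;v) - (be/ga) v F(b+1,be+1;ga+1;v) holds.  If c_n/d_n is
   nonincreasing, the partial sums obey a Chebyshev-type inequality that makes C/D
   nonincreasing on [0,1); this applies to a_n/p_n when b >= 0, and, through the
   contiguous relation, to the ratio of p_n to the coefficients of F(b+1,be+1;ga+1)
   when be <= ga.  Since ga < b+1+be, (n+1) p_n is eventually nondecreasing, so
   sum p_n diverges and P(v) -> oo as v -> 1, while a_n = o(p_n); an Abelian argument
   gives K -> 0.  When b < 0 and ga < be, some partial sum of the a_n is negative and
   all later a_n are negative, so A, hence K, is negative near 1, and a continuous
   function on [0,1) that is negative somewhere and tends to 0 attains a negative
   minimum.  Finally a_n >= b/(b+1) p_n coefficientwise when b <= 0. *)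

Lemma poch_pos a n : 0 < a -> 0 < poch a n.
Proof.
  intros Ha; induction n as [|n IH]; simpl; [lra|].
  pose proof (pos_INR n); apply Rmult_lt_0_compat; lra.
Qed.

Lemma poch_shift a n : poch a n * (a + INR n) = a * poch (a + 1) n.
Proof.
  induction n as [|n IH]; simpl poch; [simpl; ring|].
  rewrite S_INR, <- Rmult_assoc, IH; ring.
Qed.

Lemma hyp_coef_0 al be ga : hyp_coef al be ga 0 = 1.
Proof. unfold hyp_coef; simpl; field. Qed.

Lemma hyp_coef_S al be ga n : 0 < ga ->
  hyp_coef al be ga (S n) =
  hyp_coef al be ga n * ((al + INR n) * (be + INR n) / ((ga + INR n) * (INR n + 1))).
Proof.
  intros Hga; unfold hyp_coef; simpl poch.
  rewrite fact_simpl, mult_INR, S_INR.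
  pose proof (poch_pos ga n Hga); pose proof (pos_INR n); pose proof (INR_fact_neq_0 n).
  field; repeat split; lra.
Qed.

Lemma hyp_coef_pos al be ga n : 0 < al -> 0 < be -> 0 < ga -> 0 < hyp_coef al be ga n.
Proof.
  intros Hal Hbe Hga; unfold hyp_coef.
  pose proof (poch_pos al n Hal); pose proof (poch_pos be n Hbe).
  pose proof (poch_pos ga n Hga); pose proof (INR_fact_lt_0 n).
  apply Rdiv_lt_0_compat; apply Rmult_lt_0_compat; assumption.
Qed.

Lemma hyp_coef_shift_lower al be ga n :
  hyp_coef al be ga n * (al + INR n) = al * hyp_coef (al + 1) be ga n.
Proof.
  unfold hyp_coef, Rdiv.
  transitivity (al * poch (al + 1) n * poch be n * / (poch ga n * INR (Factorial.fact n)));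
    [rewrite <- poch_shift | ]; ring.
Qed.

Lemma hyp_coef_shift_upper al be ga n : 0 < be -> 0 < ga ->
  hyp_coef al be ga n * (be + INR n) / (ga + INR n) =
  be / ga * hyp_coef al (be + 1) (ga + 1) n.
Proof.
  intros Hbe Hga; unfold hyp_coef.
  assert (Hb : poch (be + 1) n = poch be n * (be + INR n) / be)
    by (rewrite poch_shift; field; lra).
  assert (Hg : poch (ga + 1) n = poch ga n * (ga + INR n) / ga)
    by (rewrite poch_shift; field; lra).
  rewrite Hb, Hg.
  pose proof (poch_pos ga n Hga); pose proof (pos_INR n); pose proof (INR_fact_neq_0 n).
  field; repeat split; lra.
Qed.

Lemma is_lim_seq_shift_ratio c d : 0 < d -> is_lim_seq (fun n => (c + INR n) / (d + INR n)) 1.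
Proof.
  intros Hd.
  apply is_lim_seq_ext with (fun n => 1 + (c - d) * / (d + INR n)).
  { intros n; pose proof (pos_INR n); field; lra. }
  replace (Finite 1) with (Finite (1 + (c - d) * 0)) by (f_equal; ring).
  apply is_lim_seq_plus'; [apply is_lim_seq_const|].
  apply is_lim_seq_mult'; [apply is_lim_seq_const|].
  replace (Finite 0) with (Rbar_inv p_infty) by reflexivity.
  apply is_lim_seq_inv; [|discriminate].
  eapply is_lim_seq_plus; [apply is_lim_seq_const | apply is_lim_seq_INR | constructor].
Qed.

Lemma CV_radius_hyp_coef al be ga : 0 < al -> 0 < be -> 0 < ga ->
  CV_radius (hyp_coef al be ga) = 1.
Proof.
  intros Hal Hbe Hga; rewrite <- Rinv_1.
  apply CV_radius_finite_DAlembert; [| lra |].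
  { intros n; apply Rgt_not_eq, hyp_coef_pos; assumption. }
  apply is_lim_seq_ext with
    (fun n => (al + INR n) / (1 + INR n) * ((be + INR n) / (ga + INR n))).
  { intros n; pose proof (hyp_coef_pos al be ga n Hal Hbe Hga); pose proof (pos_INR n).
    rewrite hyp_coef_S by assumption.
    rewrite Rabs_pos_eq.
    - field; repeat split; lra.
    - apply Rlt_le, Rdiv_lt_0_compat; [|assumption].
      apply Rmult_lt_0_compat; [assumption|].
      apply Rdiv_lt_0_compat; apply Rmult_lt_0_compat; lra. }
  replace (Finite 1) with (Finite (1 * 1)) by (f_equal; ring).
  apply is_lim_seq_mult'; apply is_lim_seq_shift_ratio; lra.
Qed.

Definition psum (c : nat -> R) (x : R) (N : nat) : R :=
  sum_f_R0 (fun n => c n * x ^ n) N.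

Lemma psum_S c x N : psum c x (S N) = psum c x N + c (S N) * x ^ S N.
Proof. reflexivity. Qed.

Lemma is_lim_seq_psum c x : ex_pseries c x -> is_lim_seq (psum c x) (PSeries c x).
Proof.
  intros Hc; apply is_lim_seq_ext with (sum_n (fun k => scal (pow_n x k) (c k))).
  - intros N; rewrite sum_n_Reals; apply sum_eq; intros n _.
    rewrite pow_n_pow; apply Rmult_comm.
  - apply PSeries_correct, Hc.
Qed.

Lemma psum_le_PSeries c x N : (forall n, 0 <= c n) -> 0 <= x -> ex_pseries c x ->
  psum c x N <= PSeries c x.
Proof.
  intros Hc Hx Hex; apply is_lim_seq_incr_compare; [apply is_lim_seq_psum, Hex|].
  intros n; rewrite psum_S.
  assert (0 <= c (S n) * x ^ S n) by (apply Rmult_le_pos; [|apply pow_le]; auto).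
  lra.
Qed.

Lemma PSeries_ge_first c x : (forall n, 0 <= c n) -> 0 <= x -> ex_pseries c x ->
  c 0%nat <= PSeries c x.
Proof.
  intros Hc Hx Hex; pose proof (psum_le_PSeries c x 0 Hc Hx Hex).
  unfold psum in *; simpl in *; lra.
Qed.

Lemma PSeries_le_psum c x N : (forall n, (N < n)%nat -> c n <= 0) -> 0 <= x ->
  ex_pseries c x -> PSeries c x <= psum c x N.
Proof.
  intros Hc Hx Hex.
  apply (is_lim_seq_decr_compare (fun k => psum c x (k + N)) _) with (n := 0%nat).
  - apply (is_lim_seq_incr_n (psum c x) N), is_lim_seq_psum, Hex.
  - intros k; change (S k + N)%nat with (S (k + N)); rewrite psum_S.
    assert (c (S (k + N)) * x ^ S (k + N) <= 0).
    { pose proof (Hc (S (k + N)) ltac:(lia)); pose proof (pow_le x (S (k + N)) Hx); nra. }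
    lra.
Qed.

Lemma filterlim_psum_at_1 c N :
  filterlim (fun x => psum c x N) (locally 1) (locally (sum_f_R0 c N)).
Proof.
  replace (sum_f_R0 c N) with (psum c 1 N)
    by (apply sum_eq; intros; rewrite pow1; ring).
  apply (continuity_pt_filterlim (fun x => psum c x N)).
  apply derivable_continuous_pt, derivable_pt_finite_sum.
Qed.

Lemma at_left_1_unit_interval : at_left 1 (fun x => 0 <= x < 1).
Proof.
  exists (mkposreal 1 Rlt_0_1); intros y Hy Hy1.
  change (Rabs (y - 1) < 1) in Hy; apply Rabs_def2 in Hy; lra.
Qed.

Lemma at_left_1_ex (P : R -> Prop) : at_left 1 P -> exists x, 0 <= x < 1 /\ P x.
Proof.
  intros HP; destruct (filter_ex _ (filter_and _ _ HP at_left_1_unit_interval)) as [x [Hx H01]].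
  exists x; split; assumption.
Qed.

Lemma filterlim_at_left_of_lt {T} (F : (T -> Prop) -> Prop) {FF : Filter F}
  (f : T -> R) l :
  filterlim f F (locally l) -> F (fun x => f x < l) -> filterlim f F (at_left l).
Proof.
  intros Hf Hlt P HP; unfold filtermap.
  apply (filter_imp (fun x => (fun y => y < l -> P y) (f x) /\ f x < l)).
  - intros x [H1 H2]; exact (H1 H2).
  - apply filter_and; [exact (Hf _ HP) | exact Hlt].
Qed.

Lemma pow_cross_le u v k m : 0 <= u <= v -> (k < m)%nat -> u ^ m * v ^ k <= v ^ m * u ^ k.
Proof.
  intros Huv Hkm; replace m with (k + (m - k))%nat by lia; rewrite !pow_add.
  assert (u ^ (m - k) <= v ^ (m - k)) by (apply pow_incr; lra).
  assert (0 <= u ^ k * v ^ k) by (apply Rmult_le_pos; apply pow_le; lra).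
  nra.
Qed.

Lemma PSeries_cross_le (c d : nat -> R) u v :
  0 <= u -> u < v -> ex_pseries c u -> ex_pseries c v -> ex_pseries d u -> ex_pseries d v ->
  (forall k m, (k < m)%nat -> c m * d k <= c k * d m) ->
  PSeries c v * PSeries d u - PSeries c u * PSeries d v
    <= (c 1%nat * d 0%nat - c 0%nat * d 1%nat) * (v - u).
Proof.
  intros Hu Huv Hcu Hcv Hdu Hdv Hcd.
  set (D := fun N => psum c v N * psum d u N - psum c u N * psum d v N).
  assert (HD : forall N, D (S N) <= D N).
  { intros N.
    set (t := fun k => (c (S N) * d k - c k * d (S N)) * (v ^ S N * u ^ k - u ^ S N * v ^ k)).
    assert (Ht : forall K, sum_f_R0 t K =
      c (S N) * v ^ S N * psum d u K - c (S N) * u ^ S N * psum d v K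
      - d (S N) * v ^ S N * psum c u K + d (S N) * u ^ S N * psum c v K).
    { induction K as [|K IH]; [unfold t, psum; simpl; ring|].
      rewrite tech5, IH, !psum_S; unfold t; ring. }
    assert (Hneg : sum_f_R0 t N <= 0).
    { rewrite <- (Rmult_0_l (INR (S N))), <- sum_cte; apply sum_Rle; intros k Hk.
      assert (c (S N) * d k - c k * d (S N) <= 0) by (pose proof (Hcd k (S N) ltac:(lia)); lra).
      assert (0 <= v ^ S N * u ^ k - u ^ S N * v ^ k)
        by (pose proof (pow_cross_le u v k (S N) ltac:(lra) ltac:(lia)); lra).
      unfold t; nra. }
    enough (D (S N) - D N = sum_f_R0 t N) by lra.
    unfold D; rewrite Ht, !psum_S; ring. }
  replace ((c 1%nat * d 0%nat - c 0%nat * d 1%nat) * (v - u)) with (D 1%nat)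
    by (unfold D, psum; simpl; ring).
  apply (is_lim_seq_decr_compare (fun N => D (S N))) with (n := 0%nat); [|intros; apply HD].
  apply (is_lim_seq_incr_1 D); unfold D.
  apply is_lim_seq_minus'; apply is_lim_seq_mult'; apply is_lim_seq_psum; assumption.
Qed.

Lemma Rdiv_lt_cross x y u v : 0 < u -> 0 < v -> x * u < y * v -> x / v < y / u.
Proof.
  intros Hu Hv H; apply Rminus_lt_0.
  replace (y / u - x / v) with ((y * v - x * u) / (u * v)) by (field; lra).
  apply Rdiv_lt_0_compat; nra.
Qed.

Lemma PSeries_ratio_lt c d u v : 0 <= u -> u < v ->
  ex_pseries c u -> ex_pseries c v -> ex_pseries d u -> ex_pseries d v ->
  0 < PSeries d u -> 0 < PSeries d v ->
  (forall k m, (k < m)%nat -> c m * d k <= c k * d m) -> c 1%nat * d 0%nat < c 0%nat * d 1%nat ->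
  PSeries c v / PSeries d v < PSeries c u / PSeries d u.
Proof.
  intros Hu Huv Hcu Hcv Hdu Hdv Hpu Hpv Hcd H01.
  pose proof (PSeries_cross_le c d u v Hu Huv Hcu Hcv Hdu Hdv Hcd).
  apply Rdiv_lt_cross; [assumption | assumption | nra].
Qed.

Lemma sum_f_R0_le_of_vanishing (e : nat -> R) N M :
  (forall n, 0 <= e n) -> (forall n, (N < n)%nat -> e n = 0) ->
  sum_f_R0 e M <= sum_f_R0 e N.
Proof.
  intros He He0; destruct (Compare_dec.lt_eq_lt_dec M N) as [[HMN | ->] | HNM].
  - rewrite (tech2 e M N HMN).
    assert (0 <= sum_f_R0 (fun i => e (S M + i)%nat) (N - S M))
      by (apply cond_pos_sum; intros; apply He).
    lra.
  - lra.
  - rewrite (tech2 e N M HNM), (sum_eq_R0 _ (M - S N)); [lra|].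
    intros n _; apply He0; lia.
Qed.

Lemma Rabs_PSeries_le (c d e : nat -> R) x eps N :
  0 <= x <= 1 -> 0 <= eps -> (forall n, 0 <= d n) ->
  (forall n, 0 <= e n) -> (forall n, (N < n)%nat -> e n = 0) ->
  (forall n, Rabs (c n) <= eps * d n + e n) -> ex_pseries c x -> ex_pseries d x ->
  Rabs (PSeries c x) <= sum_f_R0 e N + eps * PSeries d x.
Proof.
  intros Hx Heps Hd He He0 Hc Hcx Hdx.
  assert (Hpart : forall M, Rabs (psum c x M) <= sum_f_R0 e N + eps * PSeries d x).
  { intros M; eapply Rle_trans; [apply sum_f_R0_triangle|].
    apply Rle_trans with (sum_f_R0 e M + eps * psum d x M).
    - unfold psum; rewrite scal_sum, <- plus_sum; apply sum_Rle; intros n _.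
      pose proof (pow_le x n (proj1 Hx)).
      assert (x ^ n <= 1) by (rewrite <- (pow1 n); apply pow_incr; lra).
      pose proof (Hc n); pose proof (He n); pose proof (Hd n).
      rewrite Rabs_mult, (Rabs_pos_eq (x ^ n)) by assumption; nra.
    - pose proof (sum_f_R0_le_of_vanishing e N M He He0).
      pose proof (psum_le_PSeries d x M Hd (proj1 Hx) Hdx).
      apply Rplus_le_compat; [assumption | apply Rmult_le_compat_l; assumption]. }
  exact (is_lim_seq_le _ _ (Rabs (PSeries c x)) (sum_f_R0 e N + eps * PSeries d x) Hpart
    (is_lim_seq_abs _ (PSeries c x) (is_lim_seq_psum c x Hcx)) (is_lim_seq_const _)).
Qed.

Lemma ex_pseries_unit_disk c x : Rbar_le 1 (CV_radius c) -> Rabs x < 1 -> ex_pseries c x.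
Proof. intros Hc Hx; apply CV_radius_inside, (Rbar_lt_le_trans _ 1); assumption. Qed.

Lemma continuity_pt_PSeries_unit_disk c x : Rbar_le 1 (CV_radius c) -> Rabs x < 1 ->
  continuity_pt (PSeries c) x.
Proof. intros Hc Hx; apply PSeries_continuity, (Rbar_lt_le_trans _ 1); assumption. Qed.

Lemma PSeries_at_left_1_p_infty d : (forall n, 0 <= d n) -> Rbar_le 1 (CV_radius d) ->
  (forall M, exists N, M < sum_f_R0 d N) ->
  filterlim (PSeries d) (at_left 1) (Rbar_locally p_infty).
Proof.
  intros Hd Hr Hunb P [M HM]; destruct (Hunb M) as [N HN].
  assert (Hpsum : at_left 1 (fun x => M < psum d x N)).
  { apply (filter_le_within (fun u => u < 1)).
    exact (filterlim_psum_at_1 d N _ (open_gt M _ HN)). }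
  unfold filtermap; generalize (filter_and _ _ Hpsum at_left_1_unit_interval).
  apply filter_imp; intros x [H [Hx0 Hx1]]; apply HM.
  pose proof (psum_le_PSeries d x N Hd Hx0
    (ex_pseries_unit_disk d x Hr ltac:(rewrite Rabs_pos_eq; lra))); lra.
Qed.

Lemma PSeries_eventually_neg c N : Rbar_le 1 (CV_radius c) ->
  (forall n, (N < n)%nat -> c n <= 0) -> sum_f_R0 c N < 0 ->
  at_left 1 (fun x => PSeries c x < 0).
Proof.
  intros Hr Hc HN.
  assert (Hpsum : at_left 1 (fun x => psum c x N < 0)).
  { apply (filter_le_within (fun u => u < 1)).
    exact (filterlim_psum_at_1 c N _ (open_lt 0 _ HN)). }
  generalize (filter_and _ _ Hpsum at_left_1_unit_interval).
  apply filter_imp; intros x [H [Hx0 Hx1]].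
  pose proof (PSeries_le_psum c x N Hc Hx0
    (ex_pseries_unit_disk c x Hr ltac:(rewrite Rabs_pos_eq; lra))); lra.
Qed.

(* The first [N] coefficients, where [|c n| <= eps * d n] may fail, contribute a bounded
   error, which is negligible against the blow-up of [PSeries d]. *)
Lemma PSeries_ratio_at_left_1 c d : (forall n, 0 <= d n) ->
  Rbar_le 1 (CV_radius c) -> Rbar_le 1 (CV_radius d) ->
  (forall eps, 0 < eps -> exists N, forall n, (N < n)%nat -> Rabs (c n) <= eps * d n) ->
  filterlim (PSeries d) (at_left 1) (Rbar_locally p_infty) ->
  filterlim (fun x => PSeries c x / PSeries d x) (at_left 1) (locally 0).
Proof.
  intros Hd Hcr Hdr Hsmall Hinf; apply filterlim_locally; intros eps.
  pose proof (cond_pos eps) as Heps.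
  destruct (Hsmall (eps / 2) ltac:(lra)) as [N HN].
  set (e := fun n => Rmax 0 (Rabs (c n) - eps / 2 * d n)).
  assert (He : forall n, 0 <= e n) by (intros; apply Rmax_l).
  assert (He0 : forall n, (N < n)%nat -> e n = 0).
  { intros n Hn; apply Rmax_left; pose proof (HN n Hn); lra. }
  assert (Hce : forall n, Rabs (c n) <= eps / 2 * d n + e n).
  { intros n; pose proof (Rmax_r 0 (Rabs (c n) - eps / 2 * d n)); unfold e; lra. }
  set (C := sum_f_R0 e N).
  assert (HC : 0 <= C) by (apply cond_pos_sum; exact He).
  assert (Hbig : at_left 1 (fun x => 2 * C / eps < PSeries d x))
    by (apply Hinf; exists (2 * C / eps); auto).
  generalize (filter_and _ _ Hbig at_left_1_unit_interval).
  apply filter_imp; intros x [Hx Hx01].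
  assert (Rx : Rabs x < 1) by (rewrite Rabs_pos_eq; lra).
  assert (Habs := Rabs_PSeries_le c d e x (eps / 2) N ltac:(lra) ltac:(lra) Hd He He0 Hce
    (ex_pseries_unit_disk c x Hcr Rx) (ex_pseries_unit_disk d x Hdr Rx)).
  fold C in Habs.
  assert (0 <= 2 * C / eps) by (apply Rdiv_le_0_compat; lra).
  assert (HC2 : C < eps / 2 * PSeries d x)
    by (replace C with (eps / 2 * (2 * C / eps)) at 1 by (field; lra); nra).
  change (Rabs (PSeries c x / PSeries d x - 0) < eps).
  rewrite Rminus_0_r, Rabs_div, (Rabs_pos_eq (PSeries d x)) by lra.
  apply Rlt_div_l; lra.
Qed.

Lemma unit_interval_attains_neg_min (f : R -> R) :
  (forall x, 0 <= x < 1 -> continuity_pt f x) -> filterlim f (at_left 1) (locally 0) ->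
  at_left 1 (fun x => f x < 0) ->
  exists x0, 0 <= x0 < 1 /\ f x0 < 0 /\ forall x, 0 <= x < 1 -> f x0 <= f x.
Proof.
  intros Hcont Hlim Hneg.
  destruct (at_left_1_ex _ Hneg) as [v1 [Hv1 Hfv1]].
  destruct (Hlim _ (open_gt (f v1) 0 Hfv1)) as [del Hdel].
  pose proof (cond_pos del).
  set (c := Rmax v1 (1 - del / 2)).
  assert (Hc : v1 <= c /\ 1 - del / 2 <= c /\ c < 1)
    by (split; [apply Rmax_l | split; [apply Rmax_r | apply Rmax_lub_lt; lra]]).
  destruct (continuity_ab_min f 0 c ltac:(lra)) as [x0 [Hmin Hx0]].
  { intros x Hx; apply Hcont; lra. }
  assert (Hx0v1 : f x0 <= f v1) by (apply Hmin; lra).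
  exists x0; split; [lra | split; [lra|]].
  intros x Hx; destruct (Rle_lt_dec x c) as [Hxc | Hxc]; [apply Hmin; lra|].
  assert (f v1 < f x); [|lra].
  apply (Hdel x); [|lra].
  change (Rabs (x - 1) < del); rewrite Rabs_left; lra.
Qed.

Definition harm (N : nat) : R := sum_f_R0 (fun n => / (INR n + 1)) N.

Lemma harm_S N : harm (S N) = harm N + / (INR N + 2).
Proof. unfold harm; rewrite tech5, S_INR; do 2 f_equal; ring. Qed.

Lemma ln_le_harm N : ln (INR N + 2) <= harm N.
Proof.
  assert (Hln : forall t, 0 <= t -> ln (1 + t) <= t).
  { intros t Ht; rewrite <- (ln_exp t) at 2; apply ln_le; [lra | apply exp_ineq1_le]. }
  induction N as [|N IH].
  - unfold harm; simpl; replace (0 + 2) with (1 + 1) by ring.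
    replace (/ (0 + 1)) with 1 by field; apply Hln; lra.
  - rewrite harm_S, S_INR; pose proof (pos_INR N).
    assert (0 < / (INR N + 2)) by (apply Rinv_0_lt_compat; lra).
    replace (INR N + 1 + 2) with ((INR N + 2) * (1 + / (INR N + 2))) by (field; lra).
    rewrite ln_mult by lra.
    pose proof (Hln (/ (INR N + 2)) ltac:(lra)); lra.
Qed.

Lemma harm_unbounded M : exists N, M < harm N.
Proof.
  destruct (INR_archimed 1 (exp M)) as [N HN]; [lra|]; exists N.
  apply Rlt_le_trans with (ln (INR N + 2)); [|apply ln_le_harm].
  rewrite <- (ln_exp M) at 1; apply ln_increasing; [apply exp_pos | lra].
Qed.

Lemma sum_unbounded_of_harmonic_bound (d : nat -> R) c N0 : 0 < c ->
  (forall n, (N0 < n)%nat -> c <= (INR n + 1) * d n) ->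
  forall M, exists N, M < sum_f_R0 d N.
Proof.
  intros Hc Hd M.
  set (e := fun n => Rmax 0 (c / (INR n + 1) - d n)).
  assert (He : forall n, 0 <= e n) by (intros; apply Rmax_l).
  assert (He0 : forall n, (N0 < n)%nat -> e n = 0).
  { intros n Hn; apply Rmax_left; pose proof (Hd n Hn); pose proof (pos_INR n).
    enough (c / (INR n + 1) <= d n) by lra.
    apply (Rmult_le_reg_l (INR n + 1)); [lra|].
    replace ((INR n + 1) * (c / (INR n + 1))) with c by (field; lra); assumption. }
  destruct (harm_unbounded ((M + sum_f_R0 e N0) / c)) as [N HN]; exists N.
  assert (Hharm : M + sum_f_R0 e N0 < c * harm N).
  { apply (Rmult_lt_compat_l c) in HN; [|assumption].
    replace (c * ((M + sum_f_R0 e N0) / c)) with (M + sum_f_R0 e N0) in HN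
      by (field; lra); exact HN. }
  assert (Hsum : c * harm N <= sum_f_R0 d N + sum_f_R0 e N).
  { unfold harm; rewrite scal_sum, <- plus_sum; apply sum_Rle; intros n _.
    pose proof (Rmax_r 0 (c / (INR n + 1) - d n)); unfold e, Rdiv in *; lra. }
  pose proof (sum_f_R0_le_of_vanishing e N0 N He He0); lra.
Qed.

Lemma le_exp_harm b (x : nat -> R) : (forall n, 0 <= x n) ->
  (forall n, x (S n) <= x n * (1 + b / (INR n + 2))) ->
  forall N, x N <= x 0%nat * exp (b * (harm N - 1)).
Proof.
  intros Hx Hstep N; induction N as [|N IH].
  - unfold harm; simpl; replace (b * (/ (0 + 1) - 1)) with 0 by field.
    rewrite exp_0; lra.
  - rewrite harm_S.
    replace (b * (harm N + / (INR N + 2) - 1)) with (b * (harm N - 1) + b / (INR N + 2))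
      by (unfold Rdiv; ring).
    rewrite exp_plus.
    apply Rle_trans with (x N * exp (b / (INR N + 2))).
    + apply Rle_trans with (x N * (1 + b / (INR N + 2))); [apply Hstep|].
      apply Rmult_le_compat_l; [apply Hx | apply exp_ineq1_le].
    + rewrite <- Rmult_assoc; apply Rmult_le_compat_r; [left; apply exp_pos | exact IH].
Qed.

Lemma harmonic_decay b (x : nat -> R) : b < 0 -> (forall n, 0 <= x n) ->
  (forall n, x (S n) <= x n * (1 + b / (INR n + 2))) ->
  forall eps, 0 < eps -> exists N, x N < eps.
Proof.
  intros Hb Hx Hstep eps Heps.
  set (t := eps / (x 0%nat + 1)); pose proof (Hx 0%nat).
  assert (Ht : 0 < t) by (apply Rdiv_lt_0_compat; lra).
  destruct (harm_unbounded (ln t / b + 1)) as [N HN]; exists N.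
  assert (Hexp : exp (b * (harm N - 1)) < t).
  { rewrite <- (exp_ln t) by exact Ht; apply exp_increasing.
    apply (Rmult_lt_compat_l (- b)) in HN; [|lra].
    replace (- b * (ln t / b + 1)) with (- ln t - b) in HN by (field; lra); nra. }
  pose proof (le_exp_harm b x Hx Hstep N).
  assert (x 0%nat * exp (b * (harm N - 1)) <= x 0%nat * t)
    by (apply Rmult_le_compat_l; lra).
  assert (x 0%nat * t < eps).
  { unfold t; apply (Rmult_lt_reg_r (x 0%nat + 1)); [lra|].
    replace (x 0%nat * (eps / (x 0%nat + 1)) * (x 0%nat + 1)) with (x 0%nat * eps)
      by (field; lra); nra. }
  lra.
Qed.

Lemma eventually_quadratic_nonneg s c1 c0 : 0 < s ->
  exists N0, forall n, (N0 <= n)%nat -> 0 <= s * INR n ^ 2 + c1 * INR n + c0.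
Proof.
  intros Hs; destruct (INR_archimed s (Rabs c1 + Rabs c0)) as [N HN]; [lra|].
  exists (S N); intros n Hn.
  assert (Hx : INR (S N) <= INR n) by (apply le_INR; exact Hn).
  rewrite S_INR in Hx; pose proof (pos_INR N).
  pose proof (Rle_abs (- c1)); pose proof (Rle_abs (- c0)); rewrite Rabs_Ropp in *.
  pose proof (Rabs_pos c0); pose proof (Rabs_pos c1).
  assert (Rabs c1 + Rabs c0 <= s * INR n) by nra.
  nra.
Qed.

Section Contiguous.

Variables b be ga : R.
Hypotheses (hbe : 0 < be) (hb : 0 < b + 1) (hga : b + 1 < ga).

Local Notation a := (hyp_coef b be ga).
Local Notation p := (hyp_coef (b + 1) be ga).
Local Notation h := (hyp_coef (b + 1) (be + 1) (ga + 1)).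

Lemma p_pos n : 0 < p n.
Proof. apply hyp_coef_pos; lra. Qed.

Lemma h_pos n : 0 < h n.
Proof. apply hyp_coef_pos; lra. Qed.

Lemma h_eq_p n : be / ga * h n = p n * (be + INR n) / (ga + INR n).
Proof. symmetry; apply hyp_coef_shift_upper; lra. Qed.

Lemma a_0 : a 0%nat = 1.
Proof. apply hyp_coef_0. Qed.

Lemma p_0 : p 0%nat = 1.
Proof. apply hyp_coef_0. Qed.

Lemma a_mul_shift n : a n * (b + INR n) = b * p n.
Proof. apply hyp_coef_shift_lower. Qed.

Lemma p_S n : p (S n) = p n * ((b + 1 + INR n) * (be + INR n) / ((ga + INR n) * (INR n + 1))).
Proof. apply hyp_coef_S; lra. Qed.

(* The contiguous relation [F(b) = F(b+1) - (be/ga) x F(b+1,be+1;ga+1)], coefficientwise. *)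
Lemma a_contiguous n : a n = PS_minus p (PS_incr_1 (PS_scal (be / ga) h)) n.
Proof.
  unfold PS_minus, PS_incr_1, PS_scal, plus, opp, zero, scal; simpl.
  unfold plus, opp, zero, mult; simpl.
  destruct n as [|n].
  - rewrite a_0, p_0; ring.
  - pose proof (pos_INR n); pose proof (p_pos n).
    apply (Rmult_eq_reg_r (b + INR (S n))); [|rewrite S_INR; lra].
    rewrite a_mul_shift, h_eq_p, p_S, S_INR; field; lra.
Qed.

Lemma CV_radius_p : CV_radius p = 1.
Proof. apply CV_radius_hyp_coef; lra. Qed.

Lemma CV_radius_h : CV_radius h = 1.
Proof. apply CV_radius_hyp_coef; lra. Qed.

Lemma CV_radius_a : Rbar_le 1 (CV_radius a).
Proof.
  rewrite (CV_radius_ext a (PS_plus p (PS_opp (PS_incr_1 (PS_scal (be / ga) h)))))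
    by (intros n; rewrite a_contiguous; reflexivity).
  eapply Rbar_le_trans; [|apply CV_radius_plus].
  rewrite CV_radius_opp, CV_radius_incr_1, CV_radius_scal, CV_radius_p, CV_radius_h.
  - simpl; rewrite Rmin_left; lra.
  - apply Rgt_not_eq, Rdiv_lt_0_compat; lra.
Qed.

Lemma ex_pseries_p x : 0 <= x < 1 -> ex_pseries p x.
Proof.
  intros Hx; apply ex_pseries_unit_disk; [rewrite CV_radius_p; apply Rbar_le_refl|].
  rewrite Rabs_pos_eq; lra.
Qed.

Lemma ex_pseries_h x : 0 <= x < 1 -> ex_pseries h x.
Proof.
  intros Hx; apply ex_pseries_unit_disk; [rewrite CV_radius_h; apply Rbar_le_refl|].
  rewrite Rabs_pos_eq; lra.
Qed.

Lemma ex_pseries_a x : 0 <= x < 1 -> ex_pseries a x.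
Proof. intros Hx; apply ex_pseries_unit_disk; [apply CV_radius_a | rewrite Rabs_pos_eq; lra]. Qed.

Lemma PSeries_a x : 0 <= x < 1 -> PSeries a x = PSeries p x - x * (be / ga * PSeries h x).
Proof.
  intros Hx; rewrite (PSeries_ext a _ x a_contiguous).
  rewrite PSeries_minus, PSeries_incr_1, PSeries_scal; [reflexivity | apply ex_pseries_p, Hx |].
  apply ex_pseries_incr_1, ex_pseries_scal; [apply Rmult_comm | apply ex_pseries_h, Hx].
Qed.

Lemma PSeries_p_pos x : 0 <= x < 1 -> 0 < PSeries p x.
Proof.
  intros Hx; apply Rlt_le_trans with (p 0%nat); [apply p_pos|].
  apply PSeries_ge_first; [intros; left; apply p_pos | lra | apply ex_pseries_p, Hx].
Qed.

Lemma PSeries_h_pos x : 0 <= x < 1 -> 0 < PSeries h x.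
Proof.
  intros Hx; apply Rlt_le_trans with (h 0%nat); [apply h_pos|].
  apply PSeries_ge_first; [intros; left; apply h_pos | lra | apply ex_pseries_h, Hx].
Qed.

Lemma Kfun_eq x : Kfun b be ga x = PSeries a x / PSeries p x.
Proof. reflexivity. Qed.

Lemma Kfun_continuous x : 0 <= x < 1 -> continuity_pt (Kfun b be ga) x.
Proof.
  intros Hx; assert (Rx : Rabs x < 1) by (rewrite Rabs_pos_eq; lra).
  change (continuity_pt (fun y => PSeries a y / PSeries p y) x).
  apply continuity_pt_div.
  - apply continuity_pt_PSeries_unit_disk; [apply CV_radius_a | exact Rx].
  - apply continuity_pt_PSeries_unit_disk; [rewrite CV_radius_p; apply Rbar_le_refl | exact Rx].
  - apply Rgt_not_eq, PSeries_p_pos, Hx.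
Qed.

Lemma a_ratio n : (0 < n)%nat -> a n = p n * (b / (b + INR n)).
Proof.
  intros Hn; assert (1 <= INR n) by (apply (le_INR 1); lia).
  apply (Rmult_eq_reg_r (b + INR n)); [|lra].
  rewrite a_mul_shift; field; lra.
Qed.

Lemma Kfun_decreasing_of_nonneg : 0 <= b ->
  forall u v, 0 <= u -> u < v -> v < 1 -> Kfun b be ga v < Kfun b be ga u.
Proof.
  intros Hb u v Hu Huv Hv; rewrite !Kfun_eq.
  assert (Hq : forall n, (0 < n)%nat -> b / (b + INR n) <= 1).
  { intros n Hn; assert (1 <= INR n) by (apply (le_INR 1); lia).
    apply (Rmult_le_reg_r (b + INR n)); [lra|].
    replace (b / (b + INR n) * (b + INR n)) with b by (field; lra); lra. }
  apply PSeries_ratio_lt;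
    try (apply ex_pseries_a || apply ex_pseries_p || apply PSeries_p_pos); try lra.
  - intros k m Hkm; rewrite (a_ratio m) by lia.
    pose proof (p_pos m); pose proof (p_pos k).
    destruct k as [|k].
    + rewrite a_0, p_0; pose proof (Hq m ltac:(lia)); nra.
    + rewrite (a_ratio (S k)) by lia.
      assert (1 <= INR (S k) <= INR m) by (split; [apply (le_INR 1) | apply le_INR]; lia).
      assert (b / (b + INR m) <= b / (b + INR (S k))).
      { apply Rmult_le_compat_l; [lra|]; apply Rinv_le_contravar; lra. }
      assert (0 <= p m * p (S k)) by nra; nra.
  - rewrite (a_ratio 1) by lia; rewrite a_0, p_0; simpl INR; pose proof (p_pos 1).
    assert (b / (b + 1) < 1).
    { apply (Rmult_lt_reg_r (b + 1)); [lra|].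
      replace (b / (b + 1) * (b + 1)) with b by (field; lra); lra. }
    nra.
Qed.

Lemma Kfun_decreasing_of_le : be <= ga ->
  forall u v, 0 <= u -> u < v -> v < 1 -> Kfun b be ga v < Kfun b be ga u.
Proof.
  intros Hbg u v Hu Huv Hv; rewrite !Kfun_eq, !PSeries_a by lra.
  assert (Hc : 0 < be / ga) by (apply Rdiv_lt_0_compat; lra).
  assert (Hcross : forall k m, (k < m)%nat -> p m * h k <= p k * h m).
  { intros k m Hkm; apply (Rmult_le_reg_l (be / ga)); [exact Hc|].
    replace (be / ga * (p m * h k)) with (p m * (be / ga * h k)) by ring.
    replace (be / ga * (p k * h m)) with (p k * (be / ga * h m)) by ring.
    rewrite !h_eq_p.
    pose proof (p_pos m); pose proof (p_pos k); pose proof (pos_INR k).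
    assert (INR k < INR m) by (apply lt_INR; exact Hkm).
    assert ((be + INR k) / (ga + INR k) <= (be + INR m) / (ga + INR m)).
    { apply Rminus_le_0.
      replace ((be + INR m) / (ga + INR m) - (be + INR k) / (ga + INR k))
        with ((ga - be) * (INR m - INR k) / ((ga + INR m) * (ga + INR k))) by (field; lra).
      apply Rdiv_le_0_compat; [apply Rmult_le_pos | apply Rmult_lt_0_compat]; lra. }
    assert (0 <= p m * p k) by nra.
    unfold Rdiv in *; nra. }
  pose proof (PSeries_cross_le p h u v Hu Huv (ex_pseries_p u ltac:(lra))
    (ex_pseries_p v ltac:(lra)) (ex_pseries_h u ltac:(lra)) (ex_pseries_h v ltac:(lra)) Hcross).
  pose proof (Hcross 0%nat 1%nat ltac:(lia)).
  pose proof (PSeries_p_pos u ltac:(lra)); pose proof (PSeries_p_pos v ltac:(lra)).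
  pose proof (PSeries_h_pos u ltac:(lra)); pose proof (PSeries_h_pos v ltac:(lra)).
  apply Rdiv_lt_cross; [lra | lra|].
  assert (u * (PSeries h u * PSeries p v) <= u * (PSeries h v * PSeries p u))
    by (apply Rmult_le_compat_l; nra).
  assert (u * (PSeries h v * PSeries p u) < v * (PSeries h v * PSeries p u))
    by (apply Rmult_lt_compat_r; nra).
  assert (be / ga * (u * (PSeries h u * PSeries p v))
          < be / ga * (v * (PSeries h v * PSeries p u)))
    by (apply Rmult_lt_compat_l; lra).
  nra.
Qed.

Lemma a_small eps : 0 < eps -> exists N, forall n, (N < n)%nat -> Rabs (a n) <= eps * p n.
Proof.
  intros Heps; destruct (INR_archimed 1 (Rabs b / eps + Rabs b)) as [N HN]; [lra|].
  exists N; intros n Hn.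
  assert (HNn : INR N < INR n) by (apply lt_INR; exact Hn).
  pose proof (Rle_abs (- b)); rewrite Rabs_Ropp in *; pose proof (p_pos n).
  assert (0 <= Rabs b / eps) by (apply Rdiv_le_0_compat; [apply Rabs_pos | lra]).
  assert (Hbn : Rabs b <= eps * (b + INR n)).
  { replace (Rabs b) with (eps * (Rabs b / eps)) at 1 by (field; lra).
    apply Rmult_le_compat_l; lra. }
  assert (Habs : Rabs (a n) * (b + INR n) = Rabs b * p n).
  { rewrite <- (Rabs_pos_eq (b + INR n)) by lra; rewrite <- (Rabs_pos_eq (p n)) by lra.
    rewrite <- !Rabs_mult, a_mul_shift; reflexivity. }
  apply (Rmult_le_reg_r (b + INR n)); [lra|]; nra.
Qed.

(* The coefficient of [n^2] in [(n+2) p_(n+1) - (n+1) p_n] (over a positive denominator)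
   is [b + 1 + be - ga]. *)
Lemma p_mul_succ_eventually_le : ga < b + 1 + be ->
  exists N0, forall n, (N0 <= n)%nat -> (INR n + 1) * p n <= (INR n + 2) * p (S n).
Proof.
  intros Hgb.
  destruct (eventually_quadratic_nonneg (b + 1 + be - ga)
    ((b + 1) * be + 2 * (b + 1 + be - ga) - 1) (2 * (b + 1) * be - ga) ltac:(lra))
    as [N0 HN0].
  exists N0; intros n Hn; specialize (HN0 n Hn).
  pose proof (pos_INR n); pose proof (p_pos n).
  rewrite p_S; apply Rminus_le_0.
  replace ((INR n + 2) * (p n * ((b + 1 + INR n) * (be + INR n) / ((ga + INR n) * (INR n + 1))))
    - (INR n + 1) * p n)
    with (p n * ((b + 1 + be - ga) * INR n ^ 2 + ((b + 1) * be + 2 * (b + 1 + be - ga) - 1) * INR n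
      + (2 * (b + 1) * be - ga)) / ((ga + INR n) * (INR n + 1))) by (field; lra).
  apply Rdiv_le_0_compat; [apply Rmult_le_pos | apply Rmult_lt_0_compat]; lra.
Qed.

Lemma sum_p_unbounded : ga < b + 1 + be -> forall M, exists N, M < sum_f_R0 p N.
Proof.
  intros Hgb; destruct (p_mul_succ_eventually_le Hgb) as [N0 HN0].
  assert (Hgrow : forall k, (INR N0 + 1) * p N0 <= (INR (N0 + k) + 1) * p (N0 + k)%nat).
  { induction k as [|k IH]; [rewrite Nat.add_0_r; lra|].
    rewrite Nat.add_succ_r; pose proof (HN0 (N0 + k)%nat ltac:(lia)); rewrite S_INR; lra. }
  apply (sum_unbounded_of_harmonic_bound p ((INR N0 + 1) * p N0) N0).
  - pose proof (pos_INR N0); pose proof (p_pos N0); nra.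
  - intros n Hn; replace n with (N0 + (n - N0))%nat by lia; apply Hgrow.
Qed.

Lemma Kfun_at_left_1 : ga < b + 1 + be -> filterlim (Kfun b be ga) (at_left 1) (locally 0).
Proof.
  intros Hgb; apply PSeries_ratio_at_left_1.
  - intros n; left; apply p_pos.
  - apply CV_radius_a.
  - rewrite CV_radius_p; apply Rbar_le_refl.
  - exact a_small.
  - apply PSeries_at_left_1_p_infty; [intros n; left; apply p_pos | |].
    + rewrite CV_radius_p; apply Rbar_le_refl.
    + apply sum_p_unbounded, Hgb.
Qed.

Lemma a_neg n : b < 0 -> (0 < n)%nat -> a n < 0.
Proof.
  intros Hb Hn; rewrite a_ratio by exact Hn.
  assert (1 <= INR n) by (apply (le_INR 1); lia); pose proof (p_pos n).
  assert (b / (b + INR n) < 0) by (apply Rdiv_neg_pos; lra); nra.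
Qed.

Lemma sum_a_S N : sum_f_R0 a (S N) =
  p (S N) - (be - ga) * sum_f_R0 (fun k => p k / (ga + INR k)) N.
Proof.
  pose proof (pos_INR N).
  assert (Ha : forall n, a (S n) = p (S n) - p n * (be + INR n) / (ga + INR n)).
  { intros n; rewrite a_contiguous, <- h_eq_p; reflexivity. }
  induction N as [|N IH].
  - simpl; rewrite Ha, a_0, p_0; simpl; field; lra.
  - rewrite tech5, IH, Ha, tech5 by (pose proof (pos_INR N); lra).
    pose proof (pos_INR (S N)); field; lra.
Qed.

(* If all partial sums of [a] were nonnegative, [x_N = p_(N+1) / sum_(k<=N) p_k/(ga+k)]
   would stay above [be - ga] while decaying like [exp (b * harm N)]. *)
Lemma sum_a_neg : b < 0 -> ga < be -> exists N, sum_f_R0 a N < 0.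
Proof.
  intros Hb Hgb; apply not_all_not_ex; intros Hnn.
  set (r := fun N => sum_f_R0 (fun k => p k / (ga + INR k)) N).
  assert (Hr : forall N, 0 < r N).
  { intros N; apply tech1; intros k _; pose proof (p_pos k); pose proof (pos_INR k).
    apply Rdiv_lt_0_compat; lra. }
  assert (Hlow : forall N, (be - ga) * r N <= p (S N)).
  { intros N; pose proof (Hnn (S N)); rewrite sum_a_S in *; unfold r; lra. }
  set (x := fun N => p (S N) / r N).
  assert (Hx : forall N, 0 <= x N).
  { intros N; left; apply Rdiv_lt_0_compat; [apply p_pos | apply Hr]. }
  assert (Hstep : forall N, x (S N) <= x N * (1 + b / (INR N + 2))).
  { intros N; unfold x.
    assert (HrS : r (S N) = r N + p (S N) / (ga + INR (S N))) by (unfold r; apply tech5).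
    rewrite HrS, (p_S (S N)), S_INR.
    pose proof (pos_INR N); pose proof (p_pos (S N)); pose proof (Hr N); pose proof (Hlow N).
    set (X := INR N + 1) in *; set (q := p (S N)) in *; set (s := r N) in *.
    assert (HX : 0 < X) by (unfold X; lra).
    assert (HgX : 0 < ga + X) by (unfold X; lra).
    assert (HD : 0 < (ga + X) * s + q) by (pose proof (Rmult_lt_0_compat _ _ HgX H1); lra).
    replace (q * ((b + 1 + X) * (be + X) / ((ga + X) * (X + 1))) / (s + q / (ga + X)))
      with ((q * (b + 1 + X) / (X + 1)) * ((be + X) / ((ga + X) * s + q)))
      by (field; repeat split; nra).
    replace (q / s * (1 + b / (INR N + 2))) with ((q * (b + 1 + X) / (X + 1)) * / s)
      by (unfold X; field; repeat split; lra).
    apply Rmult_le_compat_l; [apply Rdiv_le_0_compat; [apply Rmult_le_pos|]; lra|].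
    apply (Rmult_le_reg_r (((ga + X) * s + q) * s)); [nra|].
    replace ((be + X) / ((ga + X) * s + q) * (((ga + X) * s + q) * s)) with ((be + X) * s)
      by (field; lra).
    replace (/ s * (((ga + X) * s + q) * s)) with ((ga + X) * s + q) by (field; lra).
    nra. }
  destruct (harmonic_decay b x Hb Hx Hstep (be - ga) ltac:(lra)) as [N HN].
  pose proof (Hlow N); pose proof (Hr N); unfold x in HN.
  apply (Rmult_lt_compat_r (r N)) in HN; [|apply Hr].
  replace (p (S N) / r N * r N) with (p (S N)) in HN by (field; lra); lra.
Qed.

Lemma Kfun_eventually_neg : b < 0 -> ga < be -> at_left 1 (fun x => Kfun b be ga x < 0).
Proof.
  intros Hb Hgb; destruct (sum_a_neg Hb Hgb) as [N HN].
  assert (Ha : at_left 1 (fun x => PSeries a x < 0)).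
  { apply (PSeries_eventually_neg a N CV_radius_a); [|exact HN].
    intros n Hn; left; apply a_neg; [exact Hb | lia]. }
  generalize (filter_and _ _ Ha at_left_1_unit_interval).
  apply filter_imp; intros x [HA Hx]; rewrite Kfun_eq.
  apply Rdiv_neg_pos; [exact HA | apply PSeries_p_pos, Hx].
Qed.

Lemma Kfun_lower_bound : b <= 0 -> forall v, 0 <= v < 1 -> b / (b + 1) <= Kfun b be ga v.
Proof.
  intros Hb v Hv; set (k := b / (b + 1)).
  set (c := PS_minus a (PS_scal k p)).
  assert (Hc : forall n, 0 <= c n).
  { intros n; unfold c, PS_minus, PS_scal, plus, opp, scal; simpl.
    unfold plus, opp, mult; simpl; unfold k.
    destruct n as [|n].
    - rewrite a_0, p_0; replace (1 + - (b / (b + 1) * 1)) with (/ (b + 1)) by (field; lra).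
      left; apply Rinv_0_lt_compat; lra.
    - rewrite a_ratio by lia; pose proof (pos_INR n); pose proof (p_pos (S n)); rewrite S_INR.
      replace (p (S n) * (b / (b + (INR n + 1))) + - (b / (b + 1) * p (S n)))
        with ((- b) * p (S n) * (INR n / ((b + (INR n + 1)) * (b + 1)))) by (field; lra).
      apply Rmult_le_pos; [nra | apply Rdiv_le_0_compat; nra]. }
  assert (Hex : ex_pseries c v).
  { apply ex_pseries_minus; [apply ex_pseries_a, Hv|].
    apply ex_pseries_scal; [apply Rmult_comm | apply ex_pseries_p, Hv]. }
  assert (HPc : PSeries c v = PSeries a v - k * PSeries p v).
  { unfold c; rewrite PSeries_minus, PSeries_scal; [reflexivity | apply ex_pseries_a, Hv |].
    apply ex_pseries_scal; [apply Rmult_comm | apply ex_pseries_p, Hv]. }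
  pose proof (PSeries_ge_first c v Hc (proj1 Hv) Hex); pose proof (Hc 0%nat).
  pose proof (PSeries_p_pos v Hv).
  rewrite Kfun_eq; apply (Rmult_le_reg_r (PSeries p v)); [assumption|].
  replace (PSeries a v / PSeries p v * PSeries p v) with (PSeries a v) by (field; lra).
  lra.
Qed.

End Contiguous.

Lemma Kfun_0 b be ga : Kfun b be ga 0 = 1.
Proof. unfold Kfun, hyp2F1; rewrite !PSeries_0, !hyp_coef_0; field. Qed.

Theorem lemma3p4 (b be ga : R) (hbe : 0 < be)
  (h1 : 0 < b + 1) (h2 : b + 1 < ga) (h3 : ga < b + 1 + be) :
  Kfun b be ga 0 = 1 /\
  filterlim (Kfun b be ga) (at_left 1) (locally 0) /\
  ((0 <= b \/ (b < 0 /\ be <= ga)) ->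
     forall u v, 0 <= u -> u < v -> v < 1 -> Kfun b be ga v < Kfun b be ga u) /\
  (b < 0 -> ga < be ->
     (exists v0, 0 <= v0 < 1 /\ Kfun b be ga v0 < 0 /\
        forall v, 0 <= v < 1 -> Kfun b be ga v0 <= Kfun b be ga v) /\
     filterlim (Kfun b be ga) (at_left 1) (at_left 0) /\
     (forall v, 0 <= v < 1 -> b / (b + 1) <= Kfun b be ga v)).
Proof.
  assert (Hlim : filterlim (Kfun b be ga) (at_left 1) (locally 0))
    by (apply Kfun_at_left_1; assumption).
  split; [apply Kfun_0|]; split; [exact Hlim|]; split.
  - intros [Hb | [_ Hbg]];
      [apply Kfun_decreasing_of_nonneg | apply Kfun_decreasing_of_le]; assumption.
  - intros Hb Hgb.
    assert (Hneg : at_left 1 (fun x => Kfun b be ga x < 0))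
      by (apply Kfun_eventually_neg; assumption).
    split; [|split].
    + apply unit_interval_attains_neg_min; [|exact Hlim | exact Hneg].
      intros x Hx; apply Kfun_continuous; assumption.
    + apply (filterlim_at_left_of_lt (at_left 1)); [exact Hlim | exact Hneg].
    + intros v Hv; apply Kfun_lower_bound; try assumption; lra.
Qed.
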